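(* Let $k\geq1$, $a_1,\dots,a_k\in\mathbb{R}\setminus\{0\}$ and real exponents $\alpha_1<\cdots<\alpha_k$. Then $f:(0,\infty)\to\mathbb{R}$, $f(x)=\sum_{i=1}^k a_ix^{\alpha_i}$, is amenable.
   Context: Relative distance on $\mathbb{R}$: $\mathrm{dist}(x,y)=0$ if $x=y=0$, $\mathrm{dist}(x,y)=|\log(y/x)|$ if $xy>0$, and $\mathrm{dist}(x,y)=\infty$ otherwise. For a real analytic function $f$ on an open set $\Omega\subseteq\mathbb{R}$, not identically zero, the condition number is $\kappa(f,x)=0$ if $x=0$, $\kappa(f,x)=\infty$ if $x\neq0$ and $f(x)=0$, and $\kappa(f,x)=|x|\,|f'(x)|/|f(x)|$ otherwise; $\mu(f,x)=1+\kappa(f,x)$. $f:\Omega\to\mathbb{R}$ is amenable if there is $C>0$ such that for every $x\in\Omega$ with $\kappa(f,x)<\infty$, the set $B_x=\{y\in\mathbb{R}:\mathrm{dist}(y,x)<1/(C\mu(f,x))\}$ is contained in $\Omega$ and $\mu(f,y)\leq C\mu(f,x)$ for all $y\in B_x$. *)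

From Stdlib Require Import Reals Lra.
From Coquelicot Require Import Coquelicot.
Open Scope R_scope.

Definition rdist (x y : R) : Rbar :=
  if Req_EM_T x 0 then (if Req_EM_T y 0 then Finite 0 else p_infty)
  else if Rlt_dec 0 (x * y) then Finite (Rabs (ln (y / x)))
  else p_infty.

Definition kappa (f : R -> R) (x : R) : Rbar :=
  if Req_EM_T x 0 then Finite 0
  else if Req_EM_T (f x) 0 then p_infty
  else Finite (Rabs x * Rabs (Derive f x) / Rabs (f x)).

Definition mu (f : R -> R) (x : R) : Rbar := Rbar_plus (Finite 1) (kappa f x).

Definition amenable (Omega : R -> Prop) (f : R -> R) : Prop :=
  exists C : R, 0 < C /\
    forall x : R, Omega x -> Rbar_lt (kappa f x) p_infty ->
      forall y : R,
        Rbar_lt (rdist y x) (Rbar_inv (Rbar_mult (Finite C) (mu f x))) ->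
        Omega y /\ Rbar_le (mu f y) (Rbar_mult (Finite C) (mu f x)).

Definition gen_poly (k : nat) (a alpha : nat -> R) (x : R) : R :=
  sum_f_R0 (fun i => a i * Rpower x (alpha i)) (k - 1).

(* Substituting [x = exp t] turns [f] into the exponential sum
   [g t = sum_i a_i exp (alpha_i t)], the relative distance into [|s - t|] and
   [kappa f x] into [|h (ln x)|] with [h = g' / g].  The key estimate is
   [|g g''| <= K (g^2 + g'^2)] on the whole line: near any point it follows from
   Taylor expansion at the first non-vanishing derivative (one exists because the
   Vandermonde system in the [alpha_i] is invertible), near [+oo] and [-oo] from
   the dominant exponential, and the local constants glue on the compact middle
   part.  Through the Riccati equation [h' = g'' / g - h^2] it gives
   [|h'| <= (K + 1) (1 + h^2)], so on an interval of length
   [1 / (10 (K + 1) (1 + |h t|))] around [t] the ratio [h] stays below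
   [2 (1 + |h t|)], and [g], whose logarithmic derivative stays bounded, cannot
   vanish there. *)

From Stdlib Require Import Reals Lra Lia Factorial Classical.
From Coquelicot Require Import Coquelicot.
Open Scope R_scope.

Lemma continuity_pt_of_is_derive f x l : is_derive f x l -> continuity_pt f x.
Proof.
  intros Hd; apply derivable_continuous_pt; exists l.
  exact (proj1 (is_derive_Reals f x l) Hd).
Qed.

Lemma is_derive_near f x l : is_derive f x l ->
  forall eps, 0 < eps -> exists d, 0 < d /\ forall y, Rabs (y - x) < d -> Rabs (f y - f x) < eps.
Proof.
  intros Hd eps Heps.
  destruct (continuity_pt_of_is_derive f x l Hd eps Heps) as [d [Hd0 Hnear]].
  exists d; split; [exact Hd0|]; intros y Hy.
  destruct (Req_dec y x) as [->|Hne].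
  - rewrite Rminus_diag, Rabs_R0; exact Heps.
  - apply (Hnear y); split; [split; [exact I|auto]|exact Hy].
Qed.

(* The bound is only required in the interior, so the lemma applies up to a
   point where it is not yet known. *)
Lemma abs_sub_le_of_is_derive f df a b B :
  (forall x, Rmin a b <= x <= Rmax a b -> is_derive f x (df x)) ->
  (forall x, Rmin a b < x < Rmax a b -> Rabs (df x) <= B) ->
  Rabs (f b - f a) <= B * Rabs (b - a).
Proof.
  intros Hd HB.
  assert (Hmvt : forall u v, u < v -> (forall x, u <= x <= v -> is_derive f x (df x)) ->
            (forall x, u < x < v -> Rabs (df x) <= B) -> Rabs (f v - f u) <= B * (v - u)).
  { intros u v Huv Hduv HBuv.
    destruct (MVT_cor2 f df u v Huv) as [c [Hc Hcuv]].
    { intros x Hx; apply is_derive_Reals, Hduv, Hx. }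
    rewrite Hc, Rabs_mult, (Rabs_pos_eq (v - u)) by lra.
    apply Rmult_le_compat_r; [lra|apply HBuv, Hcuv]. }
  unfold Rmin, Rmax in *; destruct (Rle_dec a b); destruct (Req_dec a b) as [->|Hab].
  - rewrite !Rminus_diag, Rabs_R0; lra.
  - rewrite (Rabs_pos_eq (b - a)) by lra; apply Hmvt; auto; lra.
  - lra.
  - rewrite Rabs_minus_sym, (Rabs_minus_sym b); rewrite (Rabs_pos_eq (a - b)) by lra.
    apply Hmvt; auto; lra.
Qed.

Lemma le_of_is_derive_nonneg f df a b : a <= b ->
  (forall x, a <= x <= b -> is_derive f x (df x)) ->
  (forall x, a < x < b -> 0 <= df x) -> f a <= f b.
Proof.
  intros Hab Hd Hpos; destruct (Req_dec a b) as [->|Hne]; [lra|].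
  destruct (MVT_cor2 f df a b) as [c [Hc Hcab]]; [lra| |].
  - intros x Hx; apply is_derive_Reals, Hd, Hx.
  - assert (0 <= df c * (b - a)) by (apply Rmult_le_pos; [apply Hpos, Hcab|lra]); lra.
Qed.

Lemma abs_le_mul_of_continuity_pt p q t0 : continuity_pt p t0 -> continuity_pt q t0 ->
  0 < q t0 -> exists d K, 0 < d /\ forall t, Rabs (t - t0) < d -> Rabs (p t) <= K * q t.
Proof.
  intros Hp Hq Hq0.
  destruct (Hp 1 Rlt_0_1) as [d1 [Hd1 Hp1]].
  destruct (Hq (q t0 / 2) ltac:(lra)) as [d2 [Hd2 Hq2]].
  exists (Rmin d1 d2), (2 * (Rabs (p t0) + 1) / q t0); split; [apply Rmin_pos; auto|].
  intros t Ht.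
  assert (Hpt : Rabs (p t) <= Rabs (p t0) + 1).
  { destruct (Req_dec t t0) as [->|Hne]; [lra|].
    assert (Hclose : R_dist (p t) (p t0) < 1).
    { apply Hp1; split; [split; [exact I|auto]|].
      eapply Rlt_le_trans; [exact Ht|apply Rmin_l]. }
    unfold R_dist in Hclose.
    pose proof (Rabs_triang_inv (p t) (p t0)); lra. }
  assert (Hqt : q t0 / 2 <= q t).
  { destruct (Req_dec t t0) as [->|Hne]; [lra|].
    assert (Hclose : R_dist (q t) (q t0) < q t0 / 2).
    { apply Hq2; split; [split; [exact I|auto]|].
      eapply Rlt_le_trans; [exact Ht|apply Rmin_r]. }
    unfold R_dist in Hclose; apply Rabs_def2 in Hclose; lra. }
  assert (HB : 0 < Rabs (p t0) + 1) by (pose proof (Rabs_pos (p t0)); lra).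
  set (B := Rabs (p t0) + 1) in *.
  assert (HK : 0 <= 2 * B / q t0) by (apply Rmult_le_pos; [lra|left; apply Rinv_0_lt_compat, Hq0]).
  apply (Rle_trans _ (2 * B / q t0 * (q t0 / 2))).
  - replace (2 * B / q t0 * (q t0 / 2)) with B by (field; lra); exact Hpt.
  - apply Rmult_le_compat_l; assumption.
Qed.

Lemma real_induction (P : R -> Prop) a b :
  (forall u, a <= u <= b -> (forall v, a <= v < u -> P v) ->
     exists e, 0 < e /\ forall v, a <= v < u + e -> P v) ->
  forall v, a <= v <= b -> P v.
Proof.
  intros Hstep v Hv.
  set (E := fun u => a <= u <= b /\ forall w, a <= w < u -> P w).
  destruct (completeness E) as [s [Hub Hlub]].
  - exists b; intros u [Hu _]; lra.
  - exists a; split; [lra|intros; lra].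
  assert (Has : a <= s) by (apply Hub; split; [lra|intros; lra]).
  assert (Hsb : s <= b) by (apply Hlub; intros u [Hu _]; lra).
  assert (Hbelow : forall w, a <= w < s -> P w).
  { intros w Hw; apply NNPP; intros HnP.
    enough (s <= w) by lra.
    apply Hlub; intros u [_ HPu].
    destruct (Rle_dec u w) as [|Hwu]; [assumption|].
    exfalso; apply HnP, HPu; lra. }
  destruct (Hstep s (conj Has Hsb) Hbelow) as [e [He HPe]].
  destruct (Rlt_dec s b) as [Hsb'|Hsb'].
  - set (u := Rmin (s + e / 2) b).
    assert (Hu : E u).
    { split; [split; [apply Rmin_glb; lra|apply Rmin_r]|].
      intros w Hw; apply HPe; split; [lra|].
      assert (u <= s + e / 2) by apply Rmin_l; lra. }
    assert (u <= s) by (apply Hub, Hu).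
    unfold u, Rmin in *; destruct (Rle_dec (s + e / 2) b); lra.
  - apply HPe; lra.
Qed.

Lemma uniform_of_local (Q : R -> R -> Prop) a b :
  (forall K K' t, K <= K' -> Q K t -> Q K' t) ->
  (forall t0, exists d K, 0 < d /\ forall t, Rabs (t - t0) < d -> Q K t) ->
  exists K, forall t, a <= t <= b -> Q K t.
Proof.
  intros Hmono Hloc.
  destruct (Rle_dec a b) as [Hab|Hab]; [|exists 0; intros; lra].
  enough (Hall : forall v, a <= v <= b -> exists K, forall t, a <= t <= v -> Q K t)
    by (apply Hall; lra).
  apply real_induction; intros u Hu Hbelow.
  destruct (Hloc u) as [d [Ku [Hd HKu]]].
  exists d; split; [exact Hd|]; intros v Hv.
  destruct (Req_dec u a) as [->|Hua].
  - exists Ku; intros t Ht; apply HKu, Rabs_def1; lra.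
  - set (w := Rmax a (u - d / 2)).
    assert (Hw : a <= w < u) by (unfold w, Rmax; destruct (Rle_dec a (u - d / 2)); lra).
    destruct (Hbelow w Hw) as [Kw HKw].
    exists (Rmax Kw Ku); intros t Ht.
    destruct (Rle_dec t w) as [Htw|Htw].
    + apply (Hmono Kw); [apply Rmax_l|apply HKw; lra].
    + apply (Hmono Ku); [apply Rmax_r|apply HKu, Rabs_def1].
      * lra.
      * assert (u - d / 2 <= w) by apply Rmax_r; lra.
Qed.

Fixpoint sum_lt (f : nat -> R) (n : nat) : R :=
  match n with O => 0 | S m => sum_lt f m + f m end.

Lemma sum_lt_ext f g n : (forall i, (i < n)%nat -> f i = g i) -> sum_lt f n = sum_lt g n.
Proof.
  induction n as [|n IH]; intros Hfg; simpl; [reflexivity|].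
  rewrite IH, Hfg by (intros; try apply Hfg; lia); reflexivity.
Qed.

Lemma sum_lt_plus f g n : sum_lt (fun i => f i + g i) n = sum_lt f n + sum_lt g n.
Proof. induction n as [|n IH]; simpl; [|rewrite IH]; ring. Qed.

Lemma sum_lt_scal c f n : sum_lt (fun i => c * f i) n = c * sum_lt f n.
Proof. induction n as [|n IH]; simpl; [|rewrite IH]; ring. Qed.

Lemma sum_lt_Sn_l f n : sum_lt f (S n) = f 0%nat + sum_lt (fun i => f (S i)) n.
Proof.
  induction n as [|n IH]; simpl in *; [ring|].
  rewrite IH; ring.
Qed.

Lemma sum_lt_rev f n : sum_lt f n = sum_lt (fun i => f (n - S i)%nat) n.
Proof.
  induction n as [|n IH]; [reflexivity|].
  transitivity (f n + sum_lt f n); [simpl; ring|].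
  rewrite sum_lt_Sn_l, IH; simpl; rewrite Nat.sub_0_r; reflexivity.
Qed.

Lemma sum_f_R0_sum_lt f n : sum_f_R0 f n = sum_lt f (S n).
Proof. induction n as [|n IH]; simpl in *; [ring|rewrite IH; reflexivity]. Qed.

Lemma is_derive_sum_lt (F dF : nat -> R -> R) n t :
  (forall i, is_derive (F i) t (dF i t)) ->
  is_derive (fun t => sum_lt (fun i => F i t) n) t (sum_lt (fun i => dF i t) n).
Proof.
  intros HF; induction n as [|n IH]; simpl.
  - apply (is_derive_const 0).
  - apply (is_derive_plus (fun t => sum_lt (fun i => F i t) n) (F n)); auto.
Qed.

Lemma vandermonde_kernel_trivial k (b al : nat -> R) :
  (forall i j, (i < j < k)%nat -> al i < al j) ->
  (forall j, (j < k)%nat -> sum_lt (fun i => b i * al i ^ j) k = 0) ->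
  forall i, (i < k)%nat -> b i = 0.
Proof.
  revert b; induction k as [|k IH]; intros b Hal Hsum i Hi; [lia|].
  assert (Hlow : forall i, (i < k)%nat -> b i * (al i - al k) = 0).
  { apply (IH (fun i => b i * (al i - al k))); [intros; apply Hal; lia|].
    intros j Hj.
    rewrite (sum_lt_ext _ (fun i => b i * al i ^ S j + - al k * (b i * al i ^ j)))
      by (intros; simpl; ring).
    rewrite sum_lt_plus, sum_lt_scal.
    assert (H1 := Hsum (S j) ltac:(lia)); assert (H0 := Hsum j ltac:(lia)).
    simpl sum_lt in H1, H0; simpl pow in *.
    nra. }
  assert (Hzero : forall i, (i < k)%nat -> b i = 0).
  { intros i' Hi'; assert (al i' < al k) by (apply Hal; lia).
    destruct (Rmult_integral _ _ (Hlow i' Hi')) as [|Habs]; [assumption|lra]. }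
  destruct (Nat.eq_dec i k) as [->|Hik]; [|apply Hzero; lia].
  assert (H0 := Hsum 0%nat ltac:(lia)); simpl in H0.
  rewrite (sum_lt_ext _ (fun i => 0 * 0)) in H0 by (intros i' Hi'; rewrite Hzero by lia; ring).
  rewrite sum_lt_scal in H0; lra.
Qed.

(* [expsum k a al j] is the [j]-th derivative of [t |-> sum_(i<k) a_i exp (al_i t)]. *)
Definition expsum (k : nat) (a al : nat -> R) (j : nat) (t : R) : R :=
  sum_lt (fun i => a i * al i ^ j * exp (al i * t)) k.

Lemma is_derive_expsum k a al j t : is_derive (expsum k a al j) t (expsum k a al (S j) t).
Proof.
  apply (is_derive_sum_lt (fun i t => a i * al i ^ j * exp (al i * t))
           (fun i t => a i * al i ^ S j * exp (al i * t))).
  intros i; auto_derive; [exact I|simpl; ring].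
Qed.

Lemma expsum_derivs_not_all_zero k a al : (1 <= k)%nat ->
  (forall i, (i < k)%nat -> a i <> 0) -> (forall i j, (i < j < k)%nat -> al i < al j) ->
  forall t, exists m, expsum k a al m t <> 0.
Proof.
  intros Hk Ha Hal t; apply NNPP; intros Hall.
  assert (Hb := vandermonde_kernel_trivial k (fun i => a i * exp (al i * t)) al Hal).
  assert (Ha0 : a 0%nat * exp (al 0%nat * t) = 0).
  { apply Hb; [|lia]; intros j _.
    apply NNPP; intros Hj; apply Hall; exists j; unfold expsum.
    rewrite (sum_lt_ext _ (fun i => a i * exp (al i * t) * al i ^ j)) by (intros; ring).
    exact Hj. }
  destruct (Rmult_integral _ _ Ha0) as [Hz|Hz]; [apply (Ha 0%nat); [lia|exact Hz]|].
  pose proof (exp_pos (al 0%nat * t)); lra.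
Qed.

Lemma expsum_opp k a al j t :
  expsum k a al j (- t) = (-1) ^ j * expsum k a (fun i => - al i) j t.
Proof.
  unfold expsum; rewrite <- sum_lt_scal; apply sum_lt_ext; intros i _.
  assert (Hsq : (-1) ^ j * (-1) ^ j = 1).
  { rewrite <- Rpow_mult_distr; replace (-1 * -1) with 1 by ring; apply pow1. }
  replace (- al i) with (-1 * al i) by ring.
  rewrite Rpow_mult_distr; replace (al i * - t) with (-1 * al i * t) by ring.
  transitivity ((-1) ^ j * (-1) ^ j * (a i * al i ^ j * exp (-1 * al i * t)));
    [rewrite Hsq|]; ring.
Qed.

Lemma expsum_rev k a al j t :
  expsum k a al j t = expsum k (fun i => a (k - S i)%nat) (fun i => al (k - S i)%nat) j t.
Proof. unfold expsum; apply sum_lt_rev. Qed.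

Lemma expsum_factor_last n a al j t :
  expsum (S n) a al j t =
  exp (al n * t) * (a n * al n ^ j + sum_lt (fun i => a i * al i ^ j * exp ((al i - al n) * t)) n).
Proof.
  unfold expsum; simpl sum_lt; rewrite Rmult_plus_distr_l, <- sum_lt_scal, Rplus_comm.
  f_equal; [ring|apply sum_lt_ext; intros i _].
  replace (al i * t) with (al n * t + (al i - al n) * t) by ring; rewrite exp_plus; ring.
Qed.

Lemma exp_term_small c be eps : be < 0 -> 0 < eps ->
  exists T, forall t, T <= t -> Rabs (c * exp (be * t)) <= eps.
Proof.
  intros Hbe Heps; set (r := eps / (Rabs c + 1)).
  assert (Hc := Rabs_pos c).
  assert (Hr : 0 < r) by (apply Rdiv_lt_0_compat; lra).
  exists (ln r / be); intros t Ht.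
  assert (Hexp : exp (be * t) <= r).
  { rewrite <- (exp_ln r Hr).
    assert (Hle : be * t <= ln r).
    { replace (ln r) with (be * (ln r / be)) by (field; lra).
      apply Rmult_le_compat_neg_l; lra. }
    destruct Hle as [Hlt|Heq]; [left; apply exp_increasing, Hlt|rewrite Heq; lra]. }
  rewrite Rabs_mult, (Rabs_pos_eq (exp _)) by (left; apply exp_pos).
  apply (Rle_trans _ (Rabs c * r)); [apply Rmult_le_compat_l; assumption|].
  unfold r; apply (Rle_trans _ ((Rabs c + 1) * (eps / (Rabs c + 1)))).
  - apply Rmult_le_compat_r; [left; exact Hr|lra].
  - right; field; lra.
Qed.

Lemma exp_tail_small n (c be : nat -> R) : (forall i, (i < n)%nat -> be i < 0) ->
  forall eps, 0 < eps -> exists T, forall t, T <= t ->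
  Rabs (sum_lt (fun i => c i * exp (be i * t)) n) <= eps.
Proof.
  induction n as [|n IH]; intros Hbe eps Heps.
  - exists 0; intros t _; simpl; rewrite Rabs_R0; lra.
  - destruct (IH ltac:(intros; apply Hbe; lia) (eps / 2) ltac:(lra)) as [T1 HT1].
    destruct (exp_term_small (c n) (be n) (eps / 2) (Hbe n ltac:(lia)) ltac:(lra)) as [T2 HT2].
    exists (Rmax T1 T2); intros t Ht; simpl sum_lt.
    assert (H1 := HT1 t ltac:(eapply Rle_trans; [apply Rmax_l|exact Ht])).
    assert (H2 := HT2 t ltac:(eapply Rle_trans; [apply Rmax_r|exact Ht])).
    pose proof (Rabs_triang (sum_lt (fun i => c i * exp (be i * t)) n) (c n * exp (be n * t))).
    lra.
Qed.

Lemma perturbed_ratio_bound n b0 b2 (c0 c2 be : nat -> R) : b0 <> 0 ->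
  (forall i, (i < n)%nat -> be i < 0) ->
  exists T K, 0 <= K /\ forall t, T <= t ->
  Rabs (b2 + sum_lt (fun i => c2 i * exp (be i * t)) n)
    <= K * Rabs (b0 + sum_lt (fun i => c0 i * exp (be i * t)) n).
Proof.
  intros Hb0 Hbe; assert (Hpos : 0 < Rabs b0) by (apply Rabs_pos_lt, Hb0).
  destruct (exp_tail_small n c0 be Hbe (Rabs b0 / 2) ltac:(lra)) as [T0 HT0].
  destruct (exp_tail_small n c2 be Hbe 1 Rlt_0_1) as [T2 HT2].
  assert (HB := Rabs_pos b2).
  exists (Rmax T0 T2), (2 * (Rabs b2 + 1) / Rabs b0); split.
  { apply Rmult_le_pos; [lra|left; apply Rinv_0_lt_compat, Hpos]. }
  intros t Ht.
  assert (H0 := HT0 t ltac:(eapply Rle_trans; [apply Rmax_l|exact Ht])).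
  assert (H2 := HT2 t ltac:(eapply Rle_trans; [apply Rmax_r|exact Ht])).
  set (s0 := sum_lt (fun i => c0 i * exp (be i * t)) n) in *.
  set (s2 := sum_lt (fun i => c2 i * exp (be i * t)) n) in *.
  assert (Hlow : Rabs b0 / 2 <= Rabs (b0 + s0)).
  { pose proof (Rabs_triang_inv b0 (- s0)); rewrite Rabs_Ropp in *.
    replace (b0 - - s0) with (b0 + s0) in * by ring; lra. }
  assert (Hup : Rabs (b2 + s2) <= Rabs b2 + 1) by (pose proof (Rabs_triang b2 s2); lra).
  apply (Rle_trans _ _ _ Hup).
  apply (Rle_trans _ (2 * (Rabs b2 + 1) / Rabs b0 * (Rabs b0 / 2))).
  - right; field; lra.
  - apply Rmult_le_compat_l; [apply Rmult_le_pos; [lra|left; apply Rinv_0_lt_compat, Hpos]|exact Hlow].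
Qed.

Lemma expsum_ratio_bound_at_top n a al : a n <> 0 -> (forall i, (i < n)%nat -> al i < al n) ->
  exists T K, 0 <= K /\ forall t, T <= t ->
  Rabs (expsum (S n) a al 2 t) <= K * Rabs (expsum (S n) a al 0 t).
Proof.
  intros Ha Hal.
  assert (Hb0 : a n * al n ^ 0 <> 0) by (simpl; rewrite Rmult_1_r; exact Ha).
  destruct (perturbed_ratio_bound n _ (a n * al n ^ 2) (fun i => a i * al i ^ 0)
              (fun i => a i * al i ^ 2) (fun i => al i - al n) Hb0) as [T [K [HK HT]]].
  { intros i Hi; specialize (Hal i Hi); lra. }
  exists T, K; split; [exact HK|]; intros t Ht.
  rewrite !expsum_factor_last, !Rabs_mult, (Rabs_pos_eq (exp _)) by (left; apply exp_pos).
  rewrite <- Rmult_assoc, (Rmult_comm K), Rmult_assoc.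
  apply Rmult_le_compat_l; [left; apply exp_pos|exact (HT t Ht)].
Qed.

Lemma expsum_ratio_bound_at_bottom n a al : a 0%nat <> 0 ->
  (forall i, (0 < i <= n)%nat -> al 0%nat < al i) ->
  exists T K, 0 <= K /\ forall t, t <= T ->
  Rabs (expsum (S n) a al 2 t) <= K * Rabs (expsum (S n) a al 0 t).
Proof.
  intros Ha Hal.
  destruct (expsum_ratio_bound_at_top n (fun i => a (S n - S i)%nat)
              (fun i => - al (S n - S i)%nat)) as [T [K [HK HT]]].
  - rewrite Nat.sub_diag; exact Ha.
  - intros i Hi; rewrite Nat.sub_diag; apply Ropp_lt_contravar, Hal; lia.
  - exists (- T), K; split; [exact HK|]; intros t Ht.
    rewrite <- (Ropp_involutive t), (expsum_opp _ _ _ 2), (expsum_opp _ _ _ 0).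
    replace ((-1) ^ 2) with 1 by ring; rewrite pow_O, !Rmult_1_l.
    rewrite (expsum_rev _ _ (fun i => - al i) 2), (expsum_rev _ _ (fun i => - al i) 0).
    apply HT; lra.
Qed.

(* With [h = g1 / g0] and [g1 = g0'], [g2 = g1'], the Riccati equation
   [h' = g2 / g0 - h ^ 2] turns this bound into [|h'| <= (K + 1) (1 + h ^ 2)]. *)
Definition riccati_bound (g0 g1 g2 : R -> R) (K t : R) : Prop :=
  Rabs (g0 t * g2 t) <= K * (g0 t ^ 2 + g1 t ^ 2).

Lemma riccati_bound_le g0 g1 g2 K K' t : K <= K' ->
  riccati_bound g0 g1 g2 K t -> riccati_bound g0 g1 g2 K' t.
Proof.
  unfold riccati_bound; intros HKK' HK; eapply Rle_trans; [exact HK|].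
  apply Rmult_le_compat_r; [|exact HKK']; nra.
Qed.

Lemma riccati_bound_of_ratio g0 g1 g2 K t : 0 <= K ->
  Rabs (g2 t) <= K * Rabs (g0 t) -> riccati_bound g0 g1 g2 K t.
Proof.
  unfold riccati_bound; intros HK Hratio.
  rewrite Rabs_mult.
  apply (Rle_trans _ (Rabs (g0 t) * (K * Rabs (g0 t)))).
  - apply Rmult_le_compat_l; [apply Rabs_pos|exact Hratio].
  - rewrite <- (Rabs_pos_eq (g0 t ^ 2)) by nra.
    rewrite <- RPow_abs; simpl pow.
    assert (0 <= K * g1 t ^ 2) by (apply Rmult_le_pos; nra).
    nra.
Qed.

Lemma is_derive_taylor_monomial c t0 p x :
  is_derive (fun t => c * (t - t0) ^ S p / INR (fact (S p))) x (c * (x - t0) ^ p / INR (fact p)).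
Proof.
  auto_derive; [exact I|].
  change (fact p + p * fact p)%nat with (fact (S p)).
  replace (match p with 0%nat => 1 | S _ => INR p + 1 end) with (INR (S p)) by reflexivity.
  rewrite fact_simpl, mult_INR.
  pose proof (INR_fact_neq_0 p); pose proof (not_0_INR (S p) (Nat.neq_succ_0 p)).
  unfold Rminus; field; auto.
Qed.

Lemma div_fact_le x p : 0 <= x -> x / INR (fact p) <= x.
Proof.
  intros Hx; pose proof (INR_fact_lt_0 p).
  assert (1 <= INR (fact p)) by (apply (le_INR 1); pose proof (lt_O_fact p); lia).
  apply (Rmult_le_reg_r (INR (fact p))); [assumption|].
  unfold Rdiv; rewrite Rmult_assoc, Rinv_l by lra; nra.
Qed.

Section Taylor.

Variable H : nat -> R -> R.
Hypothesis H_derive : forall j t, is_derive (H j) t (H (S j) t).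

Lemma taylor_error_bound m t0 d eps :
  (forall j, (j < m)%nat -> H j t0 = 0) ->
  (forall t, Rabs (t - t0) < d -> Rabs (H m t - H m t0) <= eps) ->
  forall p, (p <= m)%nat -> forall t, Rabs (t - t0) < d ->
  Rabs (H (m - p) t - H m t0 * (t - t0) ^ p / INR (fact p)) <= eps * Rabs (t - t0) ^ p.
Proof.
  intros Hzero Hnear p; induction p as [|p IH]; intros Hp t Ht.
  - rewrite Nat.sub_0_r; simpl; unfold Rdiv; rewrite Rinv_1, !Rmult_1_r; apply Hnear, Ht.
  - set (c := H m t0).
    set (f := fun t => H (m - S p) t - c * (t - t0) ^ S p / INR (fact (S p))).
    set (df := fun t => H (m - p) t - c * (t - t0) ^ p / INR (fact p)).
    assert (Heps : 0 <= eps).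
    { specialize (Hnear t0); rewrite !Rminus_diag, Rabs_R0 in Hnear.
      apply Hnear; pose proof (Rabs_pos (t - t0)); lra. }
    assert (Hf0 : f t0 = 0).
    { unfold f; rewrite Hzero by lia; rewrite Rminus_diag, pow_i by lia; unfold Rdiv; ring. }
    assert (Hdf : forall x, is_derive f x (df x)).
    { intros x; unfold f, df; replace (m - p)%nat with (S (m - S p)) by lia.
      apply (is_derive_minus (H (m - S p))); [apply H_derive|apply is_derive_taylor_monomial]. }
    assert (Hlip := abs_sub_le_of_is_derive f df t0 t (eps * Rabs (t - t0) ^ p)
                      (fun x _ => Hdf x)).
    rewrite Hf0, Rminus_0_r in Hlip; unfold f in Hlip; simpl pow at 2.
    rewrite (Rmult_comm (Rabs (t - t0))), <- Rmult_assoc; apply Hlip.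
    intros x Hx.
    assert (Hxt : Rabs (x - t0) <= Rabs (t - t0)).
    { unfold Rmin, Rmax, Rabs in *; destruct (Rle_dec t0 t);
        destruct (Rcase_abs (x - t0)), (Rcase_abs (t - t0)); lra. }
    eapply Rle_trans; [apply IH; [lia|lra]|].
    apply Rmult_le_compat_l; [exact Heps|].
    apply pow_incr; split; [apply Rabs_pos|exact Hxt].
Qed.

Lemma taylor_comparable m t0 : H m t0 <> 0 -> (forall j, (j < m)%nat -> H j t0 = 0) ->
  exists d, 0 < d /\ forall t, Rabs (t - t0) < d -> forall p, (p <= m)%nat ->
  Rabs (H m t0) * Rabs (t - t0) ^ p / (2 * INR (fact p)) <= Rabs (H (m - p) t) <=
  2 * Rabs (H m t0) * Rabs (t - t0) ^ p / INR (fact p).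
Proof.
  intros Hm Hzero; set (c := H m t0).
  assert (Hc : 0 < Rabs c) by (apply Rabs_pos_lt, Hm).
  set (eps := Rabs c / (2 * INR (fact m))).
  assert (Heps : 0 < eps) by (apply Rdiv_lt_0_compat; [lra|pose proof (INR_fact_lt_0 m); lra]).
  destruct (is_derive_near _ _ _ (H_derive m t0) eps Heps) as [d [Hd Hnear]].
  exists d; split; [exact Hd|]; intros t Ht p Hp.
  assert (Herr := taylor_error_bound m t0 d eps Hzero (fun t Ht => Rlt_le _ _ (Hnear t Ht)) p Hp t Ht).
  fold c in Herr.
  set (U := Rabs (t - t0) ^ p) in *.
  assert (HU : 0 <= U) by (apply pow_le, Rabs_pos).
  assert (Hfp := INR_fact_lt_0 p).
  assert (Hterm : Rabs (c * (t - t0) ^ p / INR (fact p)) = Rabs c * U / INR (fact p)).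
  { unfold Rdiv; rewrite !Rabs_mult, Rabs_inv, <- RPow_abs, (Rabs_pos_eq (INR _)) by lra.
    reflexivity. }
  assert (Hsmall : eps * U <= Rabs c * U / (2 * INR (fact p))).
  { unfold eps; unfold Rdiv; rewrite (Rmult_comm (Rabs c * U)), (Rmult_comm (Rabs c)), Rmult_assoc.
    apply Rmult_le_compat_r; [apply Rmult_le_pos; [lra|exact HU]|].
    apply Rinv_le_contravar; [lra|].
    apply Rmult_le_compat_l; [lra|apply le_INR, fact_le, Hp]. }
  set (T := c * (t - t0) ^ p / INR (fact p)) in *.
  pose proof (Rabs_triang_inv T (T - H (m - p) t)).
  pose proof (Rabs_triang (H (m - p) t - T) T).
  replace (T - (T - H (m - p) t)) with (H (m - p) t) in * by ring.
  replace (H (m - p) t - T + T) with (H (m - p) t) in * by ring.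
  replace (Rabs c * U / (2 * INR (fact p))) with (Rabs c * U / INR (fact p) / 2) in * by (field; lra).
  replace (2 * Rabs c * U / INR (fact p)) with (2 * (Rabs c * U / INR (fact p))) by (field; lra).
  pose proof (Rabs_minus_sym T (H (m - p) t)).
  assert (0 <= Rabs c * U / INR (fact p)) by (apply Rmult_le_pos; [nra|left; apply Rinv_0_lt_compat, Hfp]).
  split; lra.
Qed.

(* At a zero of order [m >= 2], [H 0], [H 1] and [H 2] are of order [|t - t0|] to
   the powers [m], [m - 1] and [m - 2], so [H 0 * H 2] is of the order of [H 1 ^ 2]. *)
Lemma riccati_bound_near_multiple_zero q t0 : H (S (S q)) t0 <> 0 ->
  (forall j, (j < S (S q))%nat -> H j t0 = 0) ->
  exists d K, 0 < d /\ forall t, Rabs (t - t0) < d -> riccati_bound (H 0) (H 1) (H 2) K t.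
Proof.
  intros Hm Hzero.
  destruct (taylor_comparable _ t0 Hm Hzero) as [d [Hd Hcmp]].
  set (F := INR (fact (S q))); assert (HF : 0 < F) by apply INR_fact_lt_0.
  exists d, (16 * F ^ 2); split; [exact Hd|]; intros t Ht; unfold riccati_bound.
  destruct (Hcmp t Ht (S (S q)) (le_n _)) as [_ H0up].
  destruct (Hcmp t Ht (S q) (le_S _ _ (le_n _))) as [H1low _].
  destruct (Hcmp t Ht q (le_S _ _ (le_S _ _ (le_n _)))) as [_ H2up].
  rewrite Nat.sub_diag in H0up.
  replace (S (S q) - S q)%nat with 1%nat in H1low by lia.
  replace (S (S q) - q)%nat with 2%nat in H2up by lia.
  set (c := Rabs (H (S (S q)) t0)) in *; set (u := Rabs (t - t0)) in *; set (w := u ^ q) in *.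
  assert (Hc : 0 <= c) by apply Rabs_pos; assert (Hu : 0 <= u) by apply Rabs_pos.
  assert (Hw : 0 <= w) by (apply pow_le, Hu).
  set (X := c * (u * w)).
  assert (HX : 0 <= X) by (apply Rmult_le_pos; [|apply Rmult_le_pos]; assumption).
  assert (H0le : Rabs (H 0%nat t) <= 2 * X * u).
  { eapply Rle_trans; [exact H0up|]; simpl pow; fold w.
    apply (Rle_trans _ (2 * c * (u * (u * w)))); [apply div_fact_le|right; unfold X; ring].
    repeat apply Rmult_le_pos; lra. }
  assert (H2le : Rabs (H 2%nat t) <= 2 * c * w).
  { eapply Rle_trans; [exact H2up|]; apply div_fact_le; repeat apply Rmult_le_pos; lra. }
  assert (H1ge : X <= 2 * F * Rabs (H 1%nat t)).
  { simpl pow in H1low; fold w F in H1low.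
    apply (Rmult_le_reg_r (/ (2 * F))); [apply Rinv_0_lt_compat; lra|].
    replace (2 * F * Rabs (H 1%nat t) * / (2 * F)) with (Rabs (H 1%nat t)) by (field; lra).
    exact H1low. }
  assert (Hprod : Rabs (H 0%nat t * H 2%nat t) <= 4 * X ^ 2).
  { rewrite Rabs_mult; apply (Rle_trans _ (2 * X * u * (2 * c * w))).
    - apply Rmult_le_compat; try apply Rabs_pos; assumption.
    - right; unfold X; ring. }
  assert (Hsq : X ^ 2 <= 4 * F ^ 2 * H 1%nat t ^ 2).
  { rewrite <- (Rabs_pos_eq (H 1%nat t ^ 2)) by nra; rewrite <- RPow_abs.
    replace (4 * F ^ 2 * Rabs (H 1%nat t) ^ 2) with ((2 * F * Rabs (H 1%nat t)) ^ 2) by ring.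
    apply pow_incr; split; assumption. }
  nra.
Qed.

Lemma riccati_bound_near_nonzero t0 : H 0 t0 <> 0 \/ H 1 t0 <> 0 ->
  exists d K, 0 < d /\ forall t, Rabs (t - t0) < d -> riccati_bound (H 0) (H 1) (H 2) K t.
Proof.
  intros Hnz.
  assert (Hcont : forall j, continuity_pt (H j) t0)
    by (intros j; exact (continuity_pt_of_is_derive _ _ _ (H_derive j t0))).
  destruct (abs_le_mul_of_continuity_pt (fun t => H 0 t * H 2 t)
              (fun t => H 0 t * H 0 t + H 1 t * H 1 t) t0) as [d [K [Hd HK]]].
  - apply continuity_pt_mult; apply Hcont.
  - apply continuity_pt_plus; apply continuity_pt_mult; apply Hcont.
  - destruct Hnz; nra.
  - exists d, K; split; [exact Hd|]; intros t Ht; unfold riccati_bound.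
    replace (H 0 t ^ 2 + H 1 t ^ 2) with (H 0 t * H 0 t + H 1 t * H 1 t) by ring.
    exact (HK t Ht).
Qed.

Lemma riccati_bound_near t0 : (exists m, H m t0 <> 0) ->
  exists d K, 0 < d /\ forall t, Rabs (t - t0) < d -> riccati_bound (H 0) (H 1) (H 2) K t.
Proof.
  intros [m Hm]; induction m as [m IH] using (well_founded_induction Wf_nat.lt_wf).
  destruct (classic (exists j, (j < m)%nat /\ H j t0 <> 0)) as [[j [Hjm Hj]]|Hleast].
  - exact (IH j Hjm Hj).
  - assert (Hzero : forall j, (j < m)%nat -> H j t0 = 0)
      by (intros j Hj; apply NNPP; intros Hnz; apply Hleast; exists j; auto).
    destruct m as [|[|q]].
    + apply riccati_bound_near_nonzero; left; exact Hm.
    + apply riccati_bound_near_nonzero; right; exact Hm.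
    + exact (riccati_bound_near_multiple_zero q t0 Hm Hzero).
Qed.

End Taylor.

Lemma expsum_riccati_bound k a al : (1 <= k)%nat ->
  (forall i, (i < k)%nat -> a i <> 0) -> (forall i j, (i < j < k)%nat -> al i < al j) ->
  exists K, 0 <= K /\ forall t,
    riccati_bound (expsum k a al 0) (expsum k a al 1) (expsum k a al 2) K t.
Proof.
  intros Hk Ha Hal; destruct k as [|n]; [lia|].
  destruct (expsum_ratio_bound_at_top n a al) as [Tp [Kp [HKp HTp]]].
  { apply Ha; lia. }
  { intros i Hi; apply Hal; lia. }
  destruct (expsum_ratio_bound_at_bottom n a al) as [Tm [Km [HKm HTm]]].
  { apply Ha; lia. }
  { intros i Hi; apply Hal; lia. }
  destruct (uniform_of_local (riccati_bound (expsum (S n) a al 0) (expsum (S n) a al 1)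
              (expsum (S n) a al 2)) Tm Tp (riccati_bound_le _ _ _)
              (fun t0 => riccati_bound_near (expsum (S n) a al) (is_derive_expsum _ _ _) t0
                 (expsum_derivs_not_all_zero _ _ _ Hk Ha Hal t0))) as [Kc HKc].
  set (K := Rmax (Rmax Kp Km) (Rmax Kc 0)).
  assert (HKp' : Kp <= K) by (eapply Rle_trans; [apply Rmax_l|apply Rmax_l]).
  assert (HKm' : Km <= K) by (eapply Rle_trans; [apply Rmax_r|apply Rmax_l]).
  assert (HKc' : Kc <= K) by (eapply Rle_trans; [apply Rmax_l|apply Rmax_r]).
  exists K; split; [lra|]; intros t.
  destruct (Rle_dec Tp t) as [Htop|Htop]; [|destruct (Rle_dec t Tm) as [Hbot|Hbot]].
  - apply (riccati_bound_le _ _ _ Kp); [exact HKp'|].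
    apply riccati_bound_of_ratio; [exact HKp|exact (HTp t Htop)].
  - apply (riccati_bound_le _ _ _ Km); [exact HKm'|].
    apply riccati_bound_of_ratio; [exact HKm|exact (HTm t Hbot)].
  - apply (riccati_bound_le _ _ _ Kc); [exact HKc'|apply HKc; lra].
Qed.

Lemma sqr_le_sqr_mul_exp g dg t u M : t <= u ->
  (forall x, t <= x <= u -> is_derive g x (dg x)) ->
  (forall x, t < x < u -> Rabs (dg x) <= M * Rabs (g x)) ->
  g t ^ 2 <= g u ^ 2 * exp (2 * M * (u - t)).
Proof.
  intros Htu Hd Hbound.
  set (phi := fun v => g v ^ 2 * exp (2 * M * (v - t))).
  replace (g t ^ 2) with (phi t) by (unfold phi; rewrite Rminus_diag, Rmult_0_r, exp_0; ring).
  apply (le_of_is_derive_nonneg phi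
           (fun x => exp (2 * M * (x - t)) * (2 * (g x * dg x) + 2 * M * g x ^ 2)) t u Htu).
  - intros x Hx; unfold phi.
    replace (exp (2 * M * (x - t)) * (2 * (g x * dg x) + 2 * M * g x ^ 2))
      with (INR 2 * dg x * g x ^ pred 2 * exp (2 * M * (x - t))
            + g x ^ 2 * (2 * M * exp (2 * M * (x - t)))) by (simpl; ring).
    apply (is_derive_mult (fun v => g v ^ 2) (fun v => exp (2 * M * (v - t)))).
    + apply is_derive_pow, Hd, Hx.
    + auto_derive; [exact I|unfold Rminus; ring].
    + intros; apply Rmult_comm.
  - intros x Hx; apply Rmult_le_pos; [left; apply exp_pos|].
    assert (Hprod : Rabs (g x * dg x) <= M * g x ^ 2).
    { rewrite Rabs_mult, <- (Rabs_pos_eq (g x ^ 2)) by nra; rewrite <- RPow_abs; simpl pow.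
      pose proof (Rabs_pos (g x)); pose proof (Hbound x Hx); nra. }
    apply Rabs_le_between in Hprod; lra.
Qed.

Section Riccati.

Variables g0 g1 g2 : R -> R.
Hypothesis g0_derive : forall t, is_derive g0 t (g1 t).
Hypothesis g1_derive : forall t, is_derive g1 t (g2 t).
Variable K : R.
Hypothesis K_nonneg : 0 <= K.
Hypothesis K_bound : forall t, riccati_bound g0 g1 g2 K t.

Let h t := g1 t / g0 t.

Lemma is_derive_ratio t : g0 t <> 0 -> is_derive h t (g2 t / g0 t - h t ^ 2).
Proof.
  intros Ht; unfold h.
  replace (g2 t / g0 t - (g1 t / g0 t) ^ 2) with ((g2 t * g0 t - g1 t * g1 t) / g0 t ^ 2)
    by (field; exact Ht).
  apply is_derive_div; auto.
Qed.

Lemma ratio_derive_bound t M : g0 t <> 0 -> Rabs (h t) <= M ->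
  Rabs (g2 t / g0 t - h t ^ 2) <= (K + 1) * (1 + M ^ 2).
Proof.
  intros Ht HM.
  assert (Hsq : 0 < g0 t ^ 2) by (apply pow2_gt_0, Ht).
  assert (Hg2 : Rabs (g2 t / g0 t) <= K * (1 + h t ^ 2)).
  { replace (g2 t / g0 t) with (g0 t * g2 t / g0 t ^ 2) by (field; exact Ht).
    replace (K * (1 + h t ^ 2)) with (K * (g0 t ^ 2 + g1 t ^ 2) / g0 t ^ 2)
      by (unfold h; field; exact Ht).
    unfold Rdiv; rewrite Rabs_mult, (Rabs_pos_eq (/ _)) by (left; apply Rinv_0_lt_compat, Hsq).
    apply Rmult_le_compat_r; [left; apply Rinv_0_lt_compat, Hsq|apply K_bound]. }
  assert (Hh2 : h t ^ 2 <= M ^ 2).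
  { rewrite <- (Rabs_pos_eq (h t ^ 2)) by nra; rewrite <- RPow_abs.
    apply pow_incr; split; [apply Rabs_pos|exact HM]. }
  pose proof (Rabs_triang (g2 t / g0 t) (- h t ^ 2)).
  rewrite Rabs_Ropp, (Rabs_pos_eq (h t ^ 2)) in * by nra.
  unfold Rminus; nra.
Qed.

Lemma ratio_bounded_near t M : g0 t <> 0 -> Rabs (h t) < M ->
  exists e, 0 < e /\ forall v, Rabs (v - t) < e -> g0 v <> 0 /\ Rabs (h v) < M.
Proof.
  intros Ht HM.
  destruct (is_derive_near g0 t _ (g0_derive t) (Rabs (g0 t))) as [d1 [Hd1 Hnear0]].
  { apply Rabs_pos_lt, Ht. }
  assert (Hcont : continuity_pt h t).
  { apply continuity_pt_div; [| |exact Ht]; eapply continuity_pt_of_is_derive; auto. }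
  destruct (Hcont (M - Rabs (h t)) ltac:(lra)) as [d2 [Hd2 Hnearh]].
  exists (Rmin d1 d2); split; [apply Rmin_pos; assumption|]; intros v Hv.
  assert (Hv1 : Rabs (v - t) < d1) by (eapply Rlt_le_trans; [exact Hv|apply Rmin_l]).
  assert (Hv2 : Rabs (v - t) < d2) by (eapply Rlt_le_trans; [exact Hv|apply Rmin_r]).
  split.
  - intros Hz; specialize (Hnear0 v Hv1); rewrite Hz, Rminus_0_l, Rabs_Ropp in Hnear0; lra.
  - destruct (Req_dec v t) as [->|Hne]; [exact HM|].
    assert (Hdist : R_dist (h v) (h t) < M - Rabs (h t))
      by (apply Hnearh; split; [split; [exact I|auto]|exact Hv2]).
    unfold R_dist in Hdist; pose proof (Rabs_triang (h v - h t) (h t)).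
    replace (h v - h t + h t) with (h v) in * by ring; lra.
Qed.

Lemma ratio_bounded_up_to t u M : t <= u ->
  (forall v, t <= v < u -> g0 v <> 0 /\ Rabs (h v) < M) -> g0 t <> 0 ->
  g0 u <> 0 /\ Rabs (h u - h t) <= (K + 1) * (1 + M ^ 2) * (u - t).
Proof.
  intros Htu Hbelow Ht.
  destruct (Req_dec t u) as [<-|Hne].
  { split; [exact Ht|]; rewrite !Rminus_diag, Rabs_R0, Rmult_0_r; lra. }
  assert (Hu : g0 u <> 0).
  { intros Hz.
    assert (Hgrowth := sqr_le_sqr_mul_exp g0 g1 t u M Htu (fun x _ => g0_derive x)).
    rewrite Hz in Hgrowth.
    assert (g0 t ^ 2 <= 0); [|pose proof (pow2_gt_0 _ Ht); lra].
    replace 0 with (0 ^ 2 * exp (2 * M * (u - t))) by ring; apply Hgrowth.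
    intros x Hx; destruct (Hbelow x ltac:(lra)) as [Hx0 HxM].
    unfold h in HxM; replace (g1 x) with (g1 x / g0 x * g0 x) by (field; exact Hx0).
    rewrite Rabs_mult; apply Rmult_le_compat_r; [apply Rabs_pos|lra]. }
  split; [exact Hu|].
  rewrite <- (Rabs_pos_eq (u - t)) by lra.
  apply (abs_sub_le_of_is_derive h (fun x => g2 x / g0 x - h x ^ 2));
    unfold Rmin, Rmax; destruct (Rle_dec t u) as [_|]; try lra.
  - intros x Hx; apply is_derive_ratio.
    destruct (Req_dec x u) as [->|Hxu]; [exact Hu|apply Hbelow; lra].
  - intros x Hx; destruct (Hbelow x ltac:(lra)) as [Hx0 HxM].
    apply ratio_derive_bound; [exact Hx0|lra].
Qed.

Lemma ratio_forward t s : g0 t <> 0 -> t <= s ->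
  s - t < / (10 * (K + 1) * (1 + Rabs (h t))) ->
  g0 s <> 0 /\ Rabs (h s) <= 2 * (1 + Rabs (h t)).
Proof.
  intros Ht Hts Hclose.
  set (x := Rabs (h t)) in *; assert (Hx : 0 <= x) by apply Rabs_pos.
  assert (Hxdef : Rabs (h t) = x) by reflexivity.
  set (M := 2 * (1 + x)); assert (HM : M = 2 * (1 + x)) by reflexivity.
  assert (Hdrift : (K + 1) * (1 + M ^ 2) * (s - t) <= (1 + x) / 2).
  { apply (Rle_trans _ ((K + 1) * (1 + M ^ 2) * / (10 * (K + 1) * (1 + x)))).
    - apply Rmult_le_compat_l; [unfold M; nra|lra].
    - apply (Rmult_le_reg_r (10 * (K + 1) * (1 + x))); [nra|].
      rewrite Rmult_assoc, Rinv_l by nra; unfold M; nra. }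
  enough (Hall : forall v, t <= v <= s -> g0 v <> 0 /\ Rabs (h v) < M)
    by (destruct (Hall s) as [Hs HsM]; [lra|split; [exact Hs|lra]]).
  apply real_induction; intros u Hu Hbelow.
  destruct (ratio_bounded_up_to t u M (proj1 Hu) Hbelow Ht) as [Hu0 Hdiff].
  assert (HuM : Rabs (h u) < M).
  { pose proof (Rabs_triang (h u - h t) (h t)); replace (h u - h t + h t) with (h u) in * by ring.
    assert ((K + 1) * (1 + M ^ 2) * (u - t) <= (K + 1) * (1 + M ^ 2) * (s - t))
      by (apply Rmult_le_compat_l; [unfold M; nra|lra]).
    lra. }
  destruct (ratio_bounded_near u M Hu0 HuM) as [e [He Hnear]].
  exists e; split; [exact He|]; intros v Hv.
  destruct (Rlt_dec v u) as [Hvu|Hvu]; [apply Hbelow; lra|apply Hnear, Rabs_def1; lra].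
Qed.

End Riccati.

Lemma is_derive_comp_opp f df : (forall t, is_derive f t (df t)) ->
  forall v, is_derive (fun v => f (- v)) v (- df (- v)).
Proof.
  intros Hf v; replace (- df (- v)) with (-1 * df (- v)) by ring.
  apply (is_derive_comp f (fun v => - v)); [apply Hf|auto_derive; [exact I|ring]].
Qed.

Lemma ratio_two_sided g0 g1 g2 K :
  (forall t, is_derive g0 t (g1 t)) -> (forall t, is_derive g1 t (g2 t)) -> 0 <= K ->
  (forall t, riccati_bound g0 g1 g2 K t) ->
  forall t, g0 t <> 0 -> forall s, Rabs (s - t) < / (10 * (K + 1) * (1 + Rabs (g1 t / g0 t))) ->
  g0 s <> 0 /\ Rabs (g1 s / g0 s) <= 2 * (1 + Rabs (g1 t / g0 t)).
Proof.
  intros Hd0 Hd1 HK HKb t Ht s Hs.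
  destruct (Rle_dec t s) as [Hts|Hst].
  - apply ratio_forward with g2 K; auto.
    rewrite Rabs_pos_eq in Hs by lra; exact Hs.
  - assert (Hratio : forall v, - g1 (- v) / g0 (- v) = - (g1 (- v) / g0 (- v)))
      by (intros v; unfold Rdiv; ring).
    assert (Hd1' : forall v, is_derive (fun v => - g1 (- v)) v (g2 (- v))).
    { intros v; replace (g2 (- v)) with (- - g2 (- v)) by ring.
      apply (is_derive_opp (fun v => g1 (- v))), (is_derive_comp_opp g1 g2 Hd1). }
    assert (HKb' : forall v, riccati_bound (fun v => g0 (- v)) (fun v => - g1 (- v))
                               (fun v => g2 (- v)) K v).
    { intros v; unfold riccati_bound; replace ((- g1 (- v)) ^ 2) with (g1 (- v) ^ 2) by ring.
      apply HKb. }
    assert (Hrefl := ratio_forward _ _ _ (is_derive_comp_opp g0 g1 Hd0) Hd1' K HK HKb' (- t) (- s)).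
    cbv beta in Hrefl; rewrite !Hratio, !Rabs_Ropp, !Ropp_involutive in Hrefl.
    apply Hrefl; [exact Ht|lra|rewrite Rabs_left in Hs by lra; lra].
Qed.

Lemma kappa_of_is_derive f x d : x <> 0 -> f x <> 0 -> is_derive f x d ->
  kappa f x = Finite (Rabs (x * d / f x)).
Proof.
  intros Hx Hfx Hd; unfold kappa.
  destruct (Req_EM_T x 0) as [|_]; [contradiction|].
  destruct (Req_EM_T (f x) 0) as [|_]; [contradiction|].
  rewrite (is_derive_unique f x d Hd); unfold Rdiv; rewrite !Rabs_mult, Rabs_inv; reflexivity.
Qed.

Lemma kappa_finite_neq0 f x : x <> 0 -> Rbar_lt (kappa f x) p_infty -> f x <> 0.
Proof.
  intros Hx Hk Hfx; unfold kappa in Hk.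
  destruct (Req_EM_T x 0) as [|_]; [contradiction|].
  destruct (Req_EM_T (f x) 0) as [_|]; [exact Hk|contradiction].
Qed.

Lemma rdist_lt_finite y x r : 0 < x -> Rbar_lt (rdist y x) (Finite r) ->
  0 < y /\ Rabs (ln y - ln x) < r.
Proof.
  intros Hx Hd; unfold rdist in Hd.
  destruct (Req_EM_T y 0) as [->|Hy].
  { destruct (Req_EM_T x 0); [lra|destruct Hd]. }
  destruct (Rlt_dec 0 (y * x)) as [Hyx|]; [|destruct Hd].
  assert (Hypos : 0 < y).
  { destruct (Rtotal_order y 0) as [Hneg|[|]]; [nra|contradiction|assumption]. }
  split; [exact Hypos|]; simpl in Hd.
  rewrite ln_div, Rabs_minus_sym in Hd by assumption; exact Hd.
Qed.

Lemma amenable_pos_of_log_ratio f g0 g1 C : 0 < C ->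
  (forall x, 0 < x -> f x = g0 (ln x)) ->
  (forall x, 0 < x -> is_derive f x (g1 (ln x) / x)) ->
  (forall t, g0 t <> 0 -> forall s, Rabs (s - t) < / (C * (1 + Rabs (g1 t / g0 t))) ->
     g0 s <> 0 /\ 1 + Rabs (g1 s / g0 s) <= C * (1 + Rabs (g1 t / g0 t))) ->
  amenable (fun x => 0 < x) f.
Proof.
  intros HC Hf Hdf Hstep.
  assert (Hkappa : forall x, 0 < x -> f x <> 0 ->
            kappa f x = Finite (Rabs (g1 (ln x) / g0 (ln x)))).
  { intros x Hx Hfx; rewrite (kappa_of_is_derive f x _ ltac:(lra) Hfx (Hdf x Hx)), Hf by exact Hx.
    rewrite Hf in Hfx by exact Hx; f_equal; f_equal; field; split; [exact Hfx|lra]. }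
  exists C; split; [exact HC|]; intros x Hx Hkx y Hy.
  assert (Hfx := kappa_finite_neq0 f x ltac:(lra) Hkx).
  unfold mu in *; rewrite (Hkappa x Hx Hfx) in *; simpl in Hy |- *.
  destruct (rdist_lt_finite y x _ Hx Hy) as [Hypos Hlog].
  rewrite Hf in Hfx by exact Hx.
  destruct (Hstep (ln x) Hfx (ln y) Hlog) as [Hg0y Hbound].
  split; [exact Hypos|].
  rewrite Hkappa by (try rewrite Hf; assumption); simpl; exact Hbound.
Qed.

Lemma gen_poly_exp k a al x : (1 <= k)%nat -> 0 < x -> gen_poly k a al x = expsum k a al 0 (ln x).
Proof.
  intros Hk Hx; unfold gen_poly, expsum; rewrite sum_f_R0_sum_lt.
  replace (S (k - 1)) with k by lia.
  apply sum_lt_ext; intros i _; unfold Rpower; simpl; ring.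
Qed.

Lemma is_derive_gen_poly k a al x : (1 <= k)%nat -> 0 < x ->
  is_derive (gen_poly k a al) x (expsum k a al 1 (ln x) / x).
Proof.
  intros Hk Hx.
  apply (is_derive_ext (fun x => sum_lt (fun i => a i * exp (al i * ln x)) k)).
  { intros t; unfold gen_poly; rewrite sum_f_R0_sum_lt; replace (S (k - 1)) with k by lia.
    reflexivity. }
  replace (expsum k a al 1 (ln x) / x) with (sum_lt (fun i => a i * al i * exp (al i * ln x) / x) k).
  2:{ unfold expsum, Rdiv; rewrite Rmult_comm, <- sum_lt_scal.
      apply sum_lt_ext; intros; simpl; ring. }
  apply (is_derive_sum_lt (fun i x => a i * exp (al i * ln x))
           (fun i x => a i * al i * exp (al i * ln x) / x)); intros i.
  auto_derive; [exact Hx|field; lra].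
Qed.

Theorem mainTheorem8 (k : nat) (a alpha : nat -> R) :
  (1 <= k)%nat ->
  (forall i, (i < k)%nat -> a i <> 0) ->
  (forall i j, (i < j < k)%nat -> alpha i < alpha j) ->
  amenable (fun x => 0 < x) (gen_poly k a alpha).
Proof.
  intros Hk Ha Halpha.
  destruct (expsum_riccati_bound k a alpha Hk Ha Halpha) as [K [HK HKb]].
  apply (amenable_pos_of_log_ratio _ (expsum k a alpha 0) (expsum k a alpha 1) (10 * (K + 1))).
  - lra.
  - intros x Hx; apply gen_poly_exp; assumption.
  - intros x Hx; apply is_derive_gen_poly; assumption.
  - intros t Ht s Hs.
    destruct (ratio_two_sided _ _ _ K (is_derive_expsum k a alpha 0) (is_derive_expsum k a alpha 1)
                HK HKb t Ht s) as [Hs0 Hbound].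
    + eapply Rlt_le_trans; [exact Hs|right; f_equal; ring].
    + split; [exact Hs0|].
      pose proof (Rabs_pos (expsum k a alpha 1 t / expsum k a alpha 0 t)); nra.
Qed.
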